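(* Let $R$ be a commutative noetherian ring and $\mathcal S$ a subcategory of $R$-modules. Then $\mathcal S\mathcal N\subseteq\mathcal N(\mathcal S)_{\rm quot}$. In particular, if $\mathcal S$ is closed under quotients and extensions, then $\mathcal N\mathcal S$ is closed under quotients and extensions.
   Context: $\mathcal N$ is the subcategory of finitely generated $R$-modules. For subcategories $\mathcal X,\mathcal Y$, $\mathcal X\mathcal Y$ is the class of modules $M$ admitting an exact sequence $0\to L\to M\to N\to 0$ with $L\in\mathcal X$, $N\in\mathcal Y$. $(\mathcal S)_{\rm quot}$ is the class of all quotient modules of modules in $\mathcal S$. $\mathcal X$ is closed under extensions if $\mathcal X\mathcal X=\mathcal X$. *)

From HB Require Import structures.
From mathcomp Require Import all_boot all_order all_algebra.
Set Implicit Arguments. Unset Strict Implicit. Unset Printing Implicit Defensive.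
Import GRing.Theory.
Local Open Scope ring_scope.

Definition is_ideal (R : comNzRingType) (I : R -> Prop) : Prop :=
  I 0 /\ (forall x y, I x -> I y -> I (x + y)) /\ (forall r x, I x -> I (r * x)).

Definition noetherian (R : comNzRingType) : Prop :=
  forall I : R -> Prop, is_ideal I ->
    exists s : seq R, forall x, I x <->
      exists c : 'I_(size s) -> R, x = \sum_(i < size s) c i * s`_i.

(* A "subcategory" of R-modules: a class of R-modules. *)
Definition modclass (R : comNzRingType) := lmodType R -> Prop.

Definition fin_gen (R : comNzRingType) : modclass R := fun M =>
  exists s : seq M, forall m : M,
    exists c : 'I_(size s) -> R, m = \sum_(i < size s) c i *: s`_i.

Definition short_exact (R : comNzRingType) (L M N : lmodType R)
  (f : {linear L -> M}) (g : {linear M -> N}) : Prop :=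
  injective f /\ (forall n : N, exists m : M, g m = n) /\
  (forall m : M, g m = 0 <-> exists l : L, f l = m).

(* X Y : modules M with 0 -> L -> M -> N -> 0 exact, L in X, N in Y. *)
Definition ext_class (R : comNzRingType) (X Y : modclass R) : modclass R := fun M =>
  exists (L N : lmodType R) (f : {linear L -> M}) (g : {linear M -> N}),
    X L /\ Y N /\ short_exact f g.

Definition quot_class (R : comNzRingType) (S : modclass R) : modclass R := fun M =>
  exists (X : lmodType R) (p : {linear X -> M}), S X /\ (forall m : M, exists x, p x = m).

Definition subclass (R : comNzRingType) (X Y : modclass R) : Prop :=
  forall M, X M -> Y M.

Definition closed_under_quotients (R : comNzRingType) (X : modclass R) : Prop :=
  subclass (quot_class X) X.

Definition closed_under_extensions (R : comNzRingType) (X : modclass R) : Prop :=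
  forall M, ext_class X X M <-> X M.

From HB Require Import structures.
From mathcomp Require Import all_boot all_order all_algebra.
From mathcomp Require Import boolp.
Set Implicit Arguments. Unset Strict Implicit. Unset Printing Implicit Defensive.
Import GRing.Theory.
Local Open Scope ring_scope.
Local Open Scope quotient_scope.

(* Let 0 -> L -> M -g-> N -> 0 be exact with N finitely generated. Lifting
   generators of N along g gives a finitely generated submodule F of M with
   M = F + L, so M/F is a quotient of L; this is SN <= N(S)_quot.
   If M has a submodule A with A and M/A in NS, let F be generated by the
   image of the finitely generated part of A and by lifts of generators of
   the finitely generated part of M/A. Then M/F is an extension of two
   quotients of S-modules (the first one being the image of A), hence lies
   in S. *)

Definition surjective (A B : Type) (f : A -> B) := forall b, exists a, f a = b.

Lemma surjective_comp (A B C : Type) (f : A -> B) (g : B -> C) :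
  surjective f -> surjective g -> surjective (g \o f).
Proof. by move=> fs gs c; have [b <-] := gs c; have [a <-] := fs b; exists a. Qed.

Lemma surjective_map (A B : Type) (f : A -> B) : surjective f -> surjective (map f).
Proof.
move=> fs; elim=> [|b t [s <-]]; first by exists [::].
by have [a <-] := fs b; exists (a :: s).
Qed.

Definition is_submodule (R : pzRingType) (M : lmodType R) (P : M -> Prop) :=
  P 0 /\ (forall x y, P x -> P y -> P (x + y)) /\ (forall a x, P x -> P (a *: x)).

Section SubmoduleQuotient.
Variables (R : pzRingType) (M : lmodType R) (P : M -> Prop).

(* The proof argument is unused: it keys the canonical instances below. *)
Definition submod_mem (_ : is_submodule P) : {pred M} := fun x => `[< P x >].

Variable HP : is_submodule P.

Lemma submod_memP x : reflect (P x) (x \in submod_mem HP).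
Proof. exact: asboolP. Qed.

Fact submod_mem_closed : subsemimod_closed (submod_mem HP).
Proof.
case: HP => P0 [PD PZ]; split; first split.
- exact/submod_memP.
- by move=> x y /submod_memP Px /submod_memP Py; apply/submod_memP/PD.
- by move=> a x /submod_memP Px; apply/submod_memP/PZ.
Qed.
HB.instance Definition _ :=
  GRing.isSubmodClosed.Build R M (submod_mem HP) submod_mem_closed.

Inductive submod : predArgType := Submod m & m \in submod_mem HP.
Definition submod_val w : M := let: Submod m _ := w in m.
HB.instance Definition _ := [isSub of submod for submod_val].
HB.instance Definition _ := [Choice of submod by <:].
HB.instance Definition _ := [SubChoice_isSubLmodule of submod by <:].

Fact submod_val_is_linear : linear submod_val. Proof. by []. Qed.
HB.instance Definition _ := GRing.isSemilinear.Build R submod M _ submod_val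
  (GRing.semilinear_linear submod_val_is_linear).

Definition submod_of m (Pm : P m) : submod := Submod (introT (submod_memP m) Pm).

Lemma submod_valP w : P (submod_val w). Proof. exact/submod_memP/valP. Qed.
Lemma submod_val_inj : injective submod_val. Proof. exact: val_inj. Qed.

Local Notation quotmod := (@Quotient.quot M (submod_mem HP)).

Definition quot_scale a := lift_op1 quotmod ( *:%R a).

Lemma pi_scale a : {morph \pi_quotmod : x / a *: x >-> quot_scale a x}.
Proof.
move=> x; unlock quot_scale; apply/eqP; rewrite piE Quotient.equivE.
by rewrite -scalerBr rpredZ // Quotient.idealrBE reprK.
Qed.
Canonical pi_scale_morph a := PiMorph1 (pi_scale a).

Lemma quot_scaleA a b x : quot_scale a (quot_scale b x) = quot_scale (a * b) x.
Proof. by rewrite -[x]reprK !piE scalerA. Qed.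
Lemma quot_scale1 : left_id 1 quot_scale.
Proof. by move=> x; rewrite -[x]reprK !piE scale1r. Qed.
Lemma quot_scaleDr : right_distributive quot_scale +%R.
Proof. by move=> a x y; rewrite -[x]reprK -[y]reprK !piE scalerDr. Qed.
Lemma quot_scaleDl x : {morph quot_scale^~ x : a b / a + b}.
Proof. by move=> a b; rewrite -[x]reprK !piE scalerDl. Qed.
HB.instance Definition _ := GRing.Zmodule_isLmodule.Build R quotmod
  quot_scaleA quot_scale1 quot_scaleDr quot_scaleDl.

Definition quot_pi (m : M) : quotmod := \pi m.
Fact quot_pi_is_linear : linear quot_pi.
Proof. by move=> a x y; rewrite /quot_pi !piE. Qed.
HB.instance Definition _ := GRing.isSemilinear.Build R M quotmod _ quot_pi
  (GRing.semilinear_linear quot_pi_is_linear).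

Lemma quot_pi_surj : surjective quot_pi.
Proof. by move=> q; exists (repr q); apply: reprK. Qed.

Lemma quot_pi_eq m m' : quot_pi m = quot_pi m' <-> P (m - m').
Proof. by rewrite (rwP (submod_memP _)) Quotient.idealrBE; apply: (rwP eqP). Qed.

Lemma quot_pi_eq0 m : quot_pi m = 0 <-> P m.
Proof. by rewrite -(linear0 quot_pi) quot_pi_eq subr0. Qed.

End SubmoduleQuotient.

Arguments submod_val {R M P} HP.
Arguments quot_pi_surj {R M P} HP.
Notation quotmod HP := (@Quotient.quot _ (submod_mem HP)).

Section Corestriction.
Variables (R : pzRingType) (U M : lmodType R) (P : M -> Prop) (HP : is_submodule P).
Variables (h : {linear U -> M}) (hP : forall u, P (h u)).

Definition corestr u : submod HP := submod_of HP (hP u).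

Lemma corestrE u : submod_val HP (corestr u) = h u. Proof. by []. Qed.

Fact corestr_is_linear : linear corestr.
Proof. by move=> a x y; apply: submod_val_inj; rewrite linearP /= linearP. Qed.
HB.instance Definition _ := GRing.isSemilinear.Build R U (submod HP) _ corestr
  (GRing.semilinear_linear corestr_is_linear).

End Corestriction.

Section Image.
Variables (R : pzRingType) (U M : lmodType R) (h : {linear U -> M}).

Definition lin_image (m : M) : Prop := exists u, h u = m.

Lemma is_submodule_image : is_submodule lin_image.
Proof.
split; first by exists 0; rewrite linear0.
split; first by move=> _ _ [u <-] [v <-]; exists (u + v); rewrite linearD.
by move=> a _ [u <-]; exists (a *: u); rewrite linearZ.
Qed.

Definition image_corestr := corestr is_submodule_image (fun u => ex_intro _ u erefl).
HB.instance Definition _ := GRing.Linear.on image_corestr.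

Lemma image_corestr_surj : surjective image_corestr.
Proof.
move=> w; have [u hu] := submod_valP w.
by exists u; apply: submod_val_inj; rewrite corestrE.
Qed.

Lemma is_submodule_preim (P : M -> Prop) :
  is_submodule P -> is_submodule (fun u => P (h u)).
Proof.
case=> P0 [PD PZ]; split; first by rewrite linear0.
by split=> [x y Px Py | a x Px]; rewrite ?linearD ?linearZ; [apply: PD | apply: PZ].
Qed.

End Image.

Section Span.
Variable R : pzRingType.
Implicit Types M N : lmodType R.

Definition span M (s : seq M) (m : M) : Prop :=
  exists c : 'I_(size s) -> R, m = \sum_(i < size s) c i *: s`_i.

Lemma is_submodule_span M (s : seq M) : is_submodule (span s).
Proof.
split; first by exists (fun _ => 0); rewrite big1 // => i _; rewrite scale0r.
split=> [_ _ [c ->] [d ->] | a _ [c ->]].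
  by exists (fun i => c i + d i); rewrite -big_split; apply: eq_bigr => i _; rewrite scalerDl.
by exists (fun i => a * c i); rewrite scaler_sumr; apply: eq_bigr => i _; rewrite scalerA.
Qed.

Lemma span_mem M (s : seq M) x : x \in s -> span s x.
Proof.
rewrite -index_mem => xs; pose i := Ordinal xs.
exists (fun j => (j == i)%:R); rewrite (bigD1 i) //= eqxx scale1r nth_index -?index_mem //.
by rewrite big1 ?addr0 // => j /negbTE ->; rewrite scale0r.
Qed.

Lemma span_min M (P : M -> Prop) (s : seq M) m :
  is_submodule P -> (forall x, x \in s -> P x) -> span s m -> P m.
Proof.
case=> P0 [PD PZ] Ps [c ->]; apply: (big_ind P) => // i _.
by apply/PZ/Ps/mem_nth.
Qed.

Lemma span_subset M (s t : seq M) m : {subset s <= t} -> span s m -> span t m.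
Proof. by move=> st; apply: span_min (is_submodule_span t) _ => x /st /span_mem. Qed.

Lemma span_map M N (h : {linear M -> N}) (s : seq M) m :
  span s m -> span (map h s) (h m).
Proof.
apply: span_min (is_submodule_preim h (is_submodule_span _)) _ => x xs.
by apply/span_mem/map_f.
Qed.

Lemma span_map_image M N (h : {linear M -> N}) (s : seq M) n :
  span (map h s) n -> exists2 m, span s m & h m = n.
Proof.
pose hs := h \o submod_val (is_submodule_span s).
move=> span_n; have [w <-] : lin_image hs n.
  apply: span_min (is_submodule_image hs) _ span_n => _ /mapP[x xs ->].
  by exists (submod_of _ (span_mem xs)).
by exists (submod_val _ w); first exact: submod_valP.
Qed.

End Span.

Section Factor.
Variables (R : comNzRingType) (M N Q : lmodType R).
Variables (g : {linear M -> N}) (h : {linear M -> Q}).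
Hypotheses (g_surj : surjective g) (ker_gh : forall m, g m = 0 -> h m = 0).

Let factor (n : N) : Q := h (sval (cid (g_surj n))).

Let factorE m : factor (g m) = h m.
Proof.
rewrite /factor; case: cid => m' gm' /=; apply/eqP; rewrite -subr_eq0 -linearB.
by apply/eqP/ker_gh; rewrite linearB gm' subrr.
Qed.

Let factor_is_linear : linear factor.
Proof.
move=> a n n'; have [m <-] := g_surj n; have [m' <-] := g_surj n'.
by rewrite -linearP !factorE linearP.
Qed.
#[local] HB.instance Definition _ := GRing.isSemilinear.Build R N Q _ factor
  (GRing.semilinear_linear factor_is_linear).

Lemma quot_class_factor (X : modclass R) : X N -> surjective h -> quot_class X Q.
Proof.
move=> XN h_surj; exists N, factor; split=> // q.
by have [m <-] := h_surj q; exists (g m); apply: factorE.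
Qed.

End Factor.

Section ModuleClasses.
Variable R : comNzRingType.
Implicit Types (L M N Q : lmodType R) (X Y S : modclass R).

Lemma short_exact_submod M (P : M -> Prop) (HP : is_submodule P) :
  short_exact (submod_val HP) (quot_pi HP).
Proof.
split; first exact: submod_val_inj.
split=> [|m]; first exact: quot_pi_surj.
rewrite quot_pi_eq0; split=> [Pm | [w <-]]; last exact: submod_valP.
by exists (submod_of HP Pm).
Qed.

Lemma ext_class_submod X Y M (P : M -> Prop) (HP : is_submodule P) :
  X (submod HP) -> Y (quotmod HP) -> ext_class X Y M.
Proof.
move=> XP YP; exists (submod HP), (quotmod HP), (submod_val HP), (quot_pi HP).
by split=> //; split=> //; apply: short_exact_submod.
Qed.
Arguments ext_class_submod {X Y M P} HP.

Lemma quot_class_image X M N Q (g : {linear M -> N}) (h : {linear M -> Q}) :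
  X N -> surjective g -> (forall m, g m = 0 -> h m = 0) ->
  quot_class X (submod (is_submodule_image h)).
Proof.
move=> XN g_surj ker_gh.
apply: (quot_class_factor (h := image_corestr h) g_surj _ XN).
- by move=> m /ker_gh hm; apply: submod_val_inj; rewrite linear0.
- exact: image_corestr_surj.
Qed.

Lemma ext_class_of_quot_closed X M :
  closed_under_quotients X -> X M -> ext_class X X M.
Proof.
move=> QX XM; apply: (ext_class_submod (is_submodule_image (@idfun M))); apply: QX.
  by exists M, (image_corestr idfun); split=> //; apply: image_corestr_surj.
by exists M, (quot_pi (is_submodule_image idfun)); split=> //; apply: quot_pi_surj.
Qed.

Lemma fin_gen_span M (s : seq M) : fin_gen (submod (is_submodule_span s)).
Proof.
set HP := is_submodule_span s.
have lift_s : map (submod_val HP) (map (insubd 0) s) = s.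
  rewrite -map_comp -[RHS]map_id; apply/eq_in_map => x xs /=.
  by apply: insubdK; apply/submod_memP/span_mem.
exists (map (insubd 0) s) => w.
have /span_map_image[w' w'_span /submod_val_inj <-] :
  span (map (submod_val HP) (map (insubd 0) s)) (submod_val HP w).
  by rewrite lift_s; apply: submod_valP.
exact: w'_span.
Qed.

Lemma short_exact_span_lift L M N (f : {linear L -> M}) (g : {linear M -> N})
    (t : seq M) m :
  short_exact f g -> span (map g t) (g m) -> exists l, span t (m - f l).
Proof.
case=> _ [_ ker_g] /span_map_image[x t_x gx].
have [l fl] : exists l, f l = m - x by apply/ker_g; rewrite linearB gx subrr.
by exists l; rewrite fl opprB addrC subrK.
Qed.

Lemma ext_class_fin_gen_swap S :
  subclass (ext_class S (@fin_gen R)) (ext_class (@fin_gen R) (quot_class S)).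
Proof.
move=> M [L [N [f [g [SL [[t Nt] exact_fg]]]]]].
have [_ [g_surj _]] := exact_fg.
case: (surjective_map g_surj t) Nt => t' <- Nt.
pose HF := is_submodule_span t'.
apply: (ext_class_submod HF); first exact: fin_gen_span.
exists L, (quot_pi HF \o f); split=> // q; have [m <-] := quot_pi_surj HF q.
have [l Fml] := short_exact_span_lift exact_fg (Nt (g m)).
by exists l; apply/esym/quot_pi_eq.
Qed.

Lemma ext_class_fin_gen_quot_closed S :
  closed_under_quotients S -> closed_under_quotients (ext_class (@fin_gen R) S).
Proof.
move=> QS Q [M [p [[A [B [f [g [[s As] [SB [_ [g_surj ker_g]]]]]]]] p_surj]]].
pose HF := is_submodule_span (map (p \o f) s).
apply: (ext_class_submod HF); first exact: fin_gen_span.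
apply/QS/(quot_class_factor (h := quot_pi HF \o p) g_surj _ SB).
  by move=> m /ker_g[a <-]; apply/quot_pi_eq0/span_map.
exact: surjective_comp p_surj (quot_pi_surj HF).
Qed.

Lemma ext_class_fin_gen_ext_stable S :
  closed_under_quotients S -> closed_under_extensions S ->
  subclass (ext_class (ext_class (@fin_gen R) S) (ext_class (@fin_gen R) S))
           (ext_class (@fin_gen R) S).
Proof.
move=> QS ES M [A [B [f [g [[A1 [A2 [fA [gA [[sA1 A1s] [SA2 [_ [gA_surj ker_gA]]]]]]]]
  [[B1 [B2 [fB [gB [[sB1 B1s] [SB2 [_ [gB_surj ker_gB]]]]]]]] exact_fg]]]]]].
have [_ [g_surj _]] := exact_fg.
have [tB gtB] := surjective_map g_surj (map fB sB1).
pose HF := is_submodule_span (tB ++ map (f \o fA) sA1).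
have F_tB x : span tB x -> span (tB ++ map (f \o fA) sA1) x.
  by apply: span_subset => y; rewrite mem_cat => ->.
have F_A1 a1 : span (tB ++ map (f \o fA) sA1) (f (fA a1)).
  apply: (span_subset (s := map (f \o fA) sA1)); last exact: span_map.
  by move=> y; rewrite mem_cat orbC => ->.
apply: (ext_class_submod HF); first exact: fin_gen_span.
pose HI := is_submodule_image (quot_pi HF \o f).
apply/ES/(ext_class_submod HI); apply: QS.
- apply: (quot_class_image SA2 gA_surj) => a /ker_gA[a1 <-].
  exact/quot_pi_eq0/F_A1.
- apply: (quot_class_factor (g := gB \o g) (h := quot_pi HI \o quot_pi HF) _ _ SB2).
  + exact: surjective_comp.
  + move=> m /ker_gB[b1 gm]; apply/quot_pi_eq0.
    have [a Fma] : exists a, span tB (m - f a).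
      by apply: short_exact_span_lift exact_fg _; rewrite gtB -gm; apply/span_map/B1s.
    by exists a; apply/esym/quot_pi_eq/F_tB.
  + exact: surjective_comp (quot_pi_surj HF) (quot_pi_surj HI).
Qed.

End ModuleClasses.

Theorem corollary2p4 (R : comNzRingType) (HR : noetherian R) (S : modclass R) :
  subclass (ext_class S (@fin_gen R)) (ext_class (@fin_gen R) (quot_class S)) /\
  (closed_under_quotients S -> closed_under_extensions S ->
     closed_under_quotients (ext_class (@fin_gen R) S) /\
     closed_under_extensions (ext_class (@fin_gen R) S)).
Proof.
split=> [|QS ES]; first exact: ext_class_fin_gen_swap.
have QNS := ext_class_fin_gen_quot_closed QS.
split=> // M; split; first exact: ext_class_fin_gen_ext_stable.
exact: ext_class_of_quot_closed.
Qed.
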